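(* Under the standing assumptions with $d\ge1$, the following hold on $V$: (i) $E^*_0AE^*_0=a_0E^*_0$, where $a_0=\theta_0+\zeta_1(\theta^*_0-\theta^*_1)^{-1}$; (ii) $E_dA^*E_d=a^*_dE_d$, where $a^*_d=\theta^*_1-\dfrac{\zeta_1+(\theta^*_0-\theta^*_1)(\theta_0-\theta_{d-1})}{\theta_{d-1}-\theta_d}$.
   Context: Let $\mathbb F$ be an algebraically closed field, $d\ge0$, and $q,a,b,c,a^*,b^*,c^*\in\mathbb F$ with $q,b,c,b^*,c^*$ nonzero and $q^2\ne\pm1$. Put $\theta_i=a+bq^{2i-d}+cq^{d-2i}$ and $\theta^*_i=a^*+b^*q^{2i-d}+c^*q^{d-2i}$ ($0\le i\le d$), and assume $\theta_0,\dots,\theta_d$ are mutually distinct and $\theta^*_0,\dots,\theta^*_d$ are mutually distinct (this forces $q^{2i}\ne1$ for $1\le i\le d$). $U_q(\widehat{\mathfrak{sl}}_2)$ is the associative unital $\mathbb F$-algebra with generators $e_i^{\pm},K_i^{\pm1}$ ($i\in\{0,1\}$) and relations $K_iK_i^{-1}=K_i^{-1}K_i=1$, $K_0K_1=K_1K_0$, $K_ie_i^{\pm}K_i^{-1}=q^{\pm2}e_i^{\pm}$, $K_ie_j^{\pm}K_i^{-1}=q^{\mp2}e_j^{\pm}$ ($i\ne j$), $e_i^+e_i^--e_i^-e_i^+=(K_i-K_i^{-1})/(q-q^{-1})$, $e_0^{\pm}e_1^{\mp}=e_1^{\mp}e_0^{\pm}$, and the $q$-Serre relations $(e_i^\pm)^3e_j^\pm-[3]_q(e_i^\pm)^2e_j^\pm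 e_i^\pm+[3]_qe_i^\pm e_j^\pm(e_i^\pm)^2-e_j^\pm(e_i^\pm)^3=0$ ($i\ne j$), where $[3]_q=q^2+1+q^{-2}$. Tensor products of modules are formed via $e_i^+(v\otimes w)=e_i^+v\otimes K_iw+v\otimes e_i^+w$, $e_i^-(v\otimes w)=e_i^-v\otimes w+K_i^{-1}v\otimes e_i^-w$, $K_i(v\otimes w)=K_iv\otimes K_iw$. For nonzero $\alpha\in\mathbb F$, $V(\alpha)$ is the module with basis $x,y$ and $K_1x=qx$, $K_1y=q^{-1}y$, $e_1^-x=y$, $e_1^-y=0$, $e_1^+x=0$, $e_1^+y=x$, $K_0x=q^{-1}x$, $K_0y=qy$, $e_0^-x=0$, $e_0^-y=q\alpha^{-1}x$, $e_0^+x=q^{-1}\alpha y$, $e_0^+y=0$. $V=V(\alpha_1)\otimes\cdots\otimes V(\alpha_d)$ with nonzero $\alpha_i\in\mathbb F$. $U_0$ is the $1$-dimensional span of $x\otimes\cdots\otimes x$. Fix $u,v,u^*,v^*\in\mathbb F$ with $uv^*=-bb^*q^{-1}(q-q^{-1})^2$, $vu^*=-cc^*q^{-1}(q-q^{-1})^2$; set $R=ue_0^++ve_1^-K_1$, $L=u^*e_1^++v^*e_0^-K_0$, $A=a1+bK_0+cK_1+R$, $A^*=a^*1+b^*K_0+c^*K_1+L$, and $E_i=\prod_{0\le j\le d,\,j\ne i}(A-\theta_j1)/(\theta_i-\theta_j)$, $E^*_i=\prod_{0\le j\le d,\,j\ne i}(A^*-\theta^*_j1)/(\theta^*_i-\theta^*_j)$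 in $U_q(\widehat{\mathfrak{sl}}_2)$. $\zeta_1$ denotes the scalar by which $LR$ acts on $U_0$. *)

From HB Require Import structures.
From mathcomp Require Import all_boot all_order all_algebra.
Set Implicit Arguments. Unset Strict Implicit. Unset Printing Implicit Defensive.
Import Order.TTheory GRing.Theory Num.Theory.
Local Open Scope ring_scope.

(* Kronecker product of the 2x2 matrix [[a, b]; [c, d]] (rows = output
   coordinates, basis order x, y) with a square matrix B:
   (A (x) B) = block matrix [[a B, b B]; [c B, d B]]. *)
Definition kron2 (F : fieldType) n (a b c d : F) (B : 'M[F]_n) : 'M[F]_(n + n) :=
  block_mx (a *: B) (b *: B) (c *: B) (d *: B).

Section Uq.
Variables (F : fieldType) (q : F).

(* V(alpha_1) (x) ... (x) V(alpha_d) (x) F, F the trivial 1-dim module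
   (e_i^{+-} = 0, K_i = 1); the last factor is harmless. *)
Fixpoint dimV (s : seq F) : nat := if s is _ :: s' then (dimV s' + dimV s')%N else 1%N.

Fixpoint K0m (s : seq F) : 'M[F]_(dimV s) :=
  match s return 'M[F]_(dimV s) with
  | [::] => 1%:M
  | _ :: s' => kron2 q^-1 0 0 q (K0m s')
  end.

Fixpoint K1m (s : seq F) : 'M[F]_(dimV s) :=
  match s return 'M[F]_(dimV s) with
  | [::] => 1%:M
  | _ :: s' => kron2 q 0 0 q^-1 (K1m s')
  end.

(* e_0^+ (v (x) w) = e_0^+ v (x) K_0 w + v (x) e_0^+ w ; e_0^+ x = q^-1 al y *)
Fixpoint e0p (s : seq F) : 'M[F]_(dimV s) :=
  match s return 'M[F]_(dimV s) with
  | [::] => 0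
  | al :: s' => kron2 0 0 (q^-1 * al) 0 (K0m s') + kron2 1 0 0 1 (e0p s')
  end.

(* e_1^+ y = x *)
Fixpoint e1p (s : seq F) : 'M[F]_(dimV s) :=
  match s return 'M[F]_(dimV s) with
  | [::] => 0
  | _ :: s' => kron2 0 1 0 0 (K1m s') + kron2 1 0 0 1 (e1p s')
  end.

(* e_0^- (v (x) w) = e_0^- v (x) w + K_0^{-1} v (x) e_0^- w ; e_0^- y = q al^-1 x,
   K_0^{-1} = diag(q, q^-1) on V(al) *)
Fixpoint e0m (s : seq F) : 'M[F]_(dimV s) :=
  match s return 'M[F]_(dimV s) with
  | [::] => 0
  | al :: s' => kron2 0 (q * al^-1) 0 0 1%:M + kron2 q 0 0 q^-1 (e0m s')
  end.

(* e_1^- x = y, K_1^{-1} = diag(q^-1, q) on V(al) *)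
Fixpoint e1m (s : seq F) : 'M[F]_(dimV s) :=
  match s return 'M[F]_(dimV s) with
  | [::] => 0
  | _ :: s' => kron2 0 0 1 0 1%:M + kron2 q^-1 0 0 q (e1m s')
  end.

(* the vector x (x) ... (x) x spanning U_0 *)
Fixpoint xvec (s : seq F) : 'cV[F]_(dimV s) :=
  match s return 'cV[F]_(dimV s) with
  | [::] => const_mx 1
  | _ :: s' => col_mx (xvec s') 0
  end.

Definition theta (a b c : F) (d i : nat) : F :=
  a + b * q ^ ((2 * i)%:Z - d%:Z) + c * q ^ (d%:Z - (2 * i)%:Z).

Definition Rm (u v : F) s := u *: e0p s + v *: (e1m s *m K1m s).
Definition Lm (us vs : F) s := us *: e1p s + vs *: (e0m s *m K0m s).
Definition Am (a b c u v : F) s := a%:M + b *: K0m s + c *: K1m s + Rm u v s.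
Definition Asm (a' b' c' us vs : F) s := a'%:M + b' *: K0m s + c' *: K1m s + Lm us vs s.

End Uq.

Definition Eidem (F : fieldType) n (M : 'M[F]_n) (th : nat -> F) (d i : nat) : 'M[F]_n :=
  foldr (fun j P => (th i - th j)^-1 *: ((M - (th j)%:M) *m P)) 1%:M
        [seq j <- iota 0 d.+1 | j != i].

From HB Require Import structures.
From mathcomp Require Import all_boot all_order all_algebra.
From mathcomp Require Import ring zify.
Import Order.TTheory GRing.Theory Num.Theory.
Local Open Scope ring_scope.
Set Implicit Arguments. Unset Strict Implicit. Unset Printing Implicit Defensive.

(* Grade the standard tensor basis of V by the number of y-factors.  Then
   A = diag(theta_i) + R and A* = diag(theta*_i) + L, where R raises and L
   lowers the grade by one.  The heart of the proof is an abstract "sandwich"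
   theorem: if N = diag(t_N) + L with L lowering and the grade-0 space is the
   line through w, then E = prod_{j=1..d} (N - t_j)/(t_0 - t_j) is a rank-one
   matrix w f (its image lies in grade 0), and for A = diag(t_A) + R with R
   raising and LRw = z w one gets E A E = (t_A(0) + z/(t_N(0) - t_N(1))) E.
   Part (i) is the sandwich for E*_0 on the bottom vector x(x)...(x)x.  Part (ii)
   is the same theorem for E_d, read in the reversed grading, on y(x)...(x)y,
   with RL acting by a scalar zy there.  An explicit recursion over the tensor
   factors computes both zeta_1 = zx and zy; their difference is expressed in
   the theta's using uv* and vu*, which turns the sandwich value into the
   formula of the paper. *)


Section LagrangeProduct.
Variables (F : fieldType) (n : nat) (M : 'M[F]_n) (t : nat -> F) (i : nat).

Definition lprod (l : seq nat) : 'M[F]_n :=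
  foldr (fun j P => (t i - t j)^-1 *: ((M - (t j)%:M) *m P)) 1%:M l.

Lemma lprod_comm l : M *m lprod l = lprod l *m M.
Proof.
have factor_comm (a : F) : M *m (M - a%:M) = (M - a%:M) *m M.
  by rewrite mulmxBr mulmxBl scalar_mxC.
elim: l => [|j l IH] /=; first by rewrite mulmx1 mul1mx.
by rewrite -scalemxAr -scalemxAl mulmxA factor_comm -!mulmxA IH.
Qed.

Lemma lprod_rev l : lprod (rev l) = lprod l.
Proof.
have lprod_rcons l' j :
    lprod (rcons l' j) = lprod l' *m ((t i - t j)^-1 *: (M - (t j)%:M)).
  elim: l' => [|j' l' IH] /=; first by rewrite mulmx1 mul1mx.
  by rewrite IH -scalemxAl mulmxA.
elim: l => [|j l IH] //=.
rewrite rev_cons lprod_rcons IH -scalemxAr; congr (_ *: _).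
by rewrite mulmxBr mulmxBl -lprod_comm scalar_mxC.
Qed.

Lemma lprod_fix (w : 'cV[F]_n) l : M *m w = t i *: w ->
  {in l, forall j, t i != t j} -> lprod l *m w = w.
Proof.
move=> Mw; elim: l => [|j l IH] l_ok /=; first by rewrite mul1mx.
rewrite -scalemxAl -mulmxA IH => [|j' j'_l]; last by apply: l_ok; rewrite inE j'_l orbT.
rewrite mulmxBl Mw mul_scalar_mx -scalerBl scalerA mulVf ?scale1r //.
by rewrite subr_eq0 l_ok // inE eqxx.
Qed.

End LagrangeProduct.

Lemma lprod_map (F : fieldType) n (M : 'M[F]_n) t i i' (f : nat -> nat) l :
  t (f i') = t i -> lprod M t i (map f l) = lprod M (t \o f) i' l.
Proof. by move=> ti; elim: l => [|j l IH] //=; rewrite IH ti. Qed.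

Lemma Eidem_first (F : fieldType) n (M : 'M[F]_n) t d :
  Eidem M t d 0 = lprod M t 0 (iota 1 d).
Proof.
rewrite /Eidem /=; congr foldr; apply/all_filterP/allP => j.
by rewrite mem_iota => /andP [j_gt0 _]; rewrite -lt0n.
Qed.

Lemma Eidem_last (F : fieldType) n (M : 'M[F]_n) t d :
  Eidem M t d d = lprod M (fun j => t (d - j)%N) 0 (iota 1 d).
Proof.
rewrite /Eidem.
have -> : [seq j <- iota 0 d.+1 | j != d] = rev (map (fun j => d - j)%N (iota 1 d)).
  rewrite -addn1 iotaD filter_cat /= add0n eqxx cats0.
  rewrite (all_filterP _); last by apply/allP => j; rewrite mem_iota add0n neq_ltn => /andP [_ ->].
  apply: (@eq_from_nth _ 0%N); first by rewrite size_rev size_map !size_iota.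
  move=> j; rewrite size_iota => j_lt.
  rewrite nth_rev size_map size_iota // (nth_map 0%N) ?size_iota ?nth_iota //; lia.
rewrite -/(lprod M t d _) lprod_rev (@lprod_map _ _ M t d 0%N) //.
by rewrite subn0.
Qed.

Section Grading.
Variables (F : fieldType) (n : nat) (gr : 'I_n -> nat).

Definition lowering (L : 'M[F]_n) := forall k l, L k l != 0 -> gr l = (gr k).+1.
Definition raising (R : 'M[F]_n) := forall k l, R k l != 0 -> gr k = (gr l).+1.
Definition gdiag (t : nat -> F) : 'M[F]_n := diag_mx (\row_k t (gr k)).

Lemma gdiagE t k l : gdiag t k l = t (gr k) *+ (k == l).
Proof. by rewrite !mxE. Qed.

Lemma eq_gdiag t1 t2 : (forall i, t1 i = t2 i) -> gdiag t1 = gdiag t2.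
Proof. by move=> t12; apply/matrixP => k l; rewrite !gdiagE t12. Qed.

Lemma gdiag_const a : a%:M = gdiag (fun=> a).
Proof. by apply/matrixP => k l; rewrite gdiagE mxE. Qed.

Lemma gdiagD t1 t2 : gdiag t1 + gdiag t2 = gdiag (fun i => t1 i + t2 i).
Proof. by apply/matrixP => k l; rewrite mxE !gdiagE mulrnDl. Qed.

Lemma gdiagZ a t : a *: gdiag t = gdiag (fun i => a * t i).
Proof. by apply/matrixP => k l; rewrite mxE !gdiagE mulrnAr. Qed.

Lemma gdiag_homog g t p (X : 'M[F]_(n, p)) :
  (forall k j, X k j != 0 -> gr k = g) -> gdiag t *m X = t g *: X.
Proof.
move=> homX; apply/matrixP => k j; rewrite mul_diag_mx !mxE.
by case: (eqVneq (X k j) 0) => [->|/homX ->]; rewrite ?mulr0.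
Qed.

Section Support.
Variables (d : nat) (N L : 'M[F]_n) (tN : nat -> F).
Hypotheses (gr_le : forall k, (gr k <= d)%N) (L_low : lowering L) (NE : N = gdiag tN + L).

Lemma factor_kills m p (X : 'M[F]_(n, p)) :
  (forall k j, (m < gr k)%N -> X k j = 0) ->
  forall k j, (m <= gr k)%N -> ((N - (tN m)%:M) *m X) k j = 0.
Proof.
move=> Xsupp k j m_le.
have LX0 : (L *m X) k j = 0.
  rewrite mxE big1 // => l _; case: (eqVneq (L k l) 0) => [->|/L_low Lkl]; first by rewrite mul0r.
  by rewrite Xsupp ?mulr0 // Lkl ltnS.
rewrite NE mulmxBl mulmxDl mul_scalar_mx mul_diag_mx 2!mxE [(L *m X) k j]LX0 !mxE.
rewrite addr0 -mulrBl.
case: (ltngtP m (gr k)) m_le => [m_lt|//|<-] _; first by rewrite Xsupp ?mulr0.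
by rewrite subrr mul0r.
Qed.

Lemma lprod_support k j : (0 < gr k)%N -> lprod N tN 0 (iota 1 d) k j = 0.
Proof.
suff supp e m : (m + e = d)%N -> forall k j, (m < gr k)%N -> lprod N tN 0 (iota m.+1 e) k j = 0.
  by apply: supp; rewrite add0n.
elim: e m => [|e IH] m me {}k {}j m_lt /=.
  by move: (gr_le k); rewrite -me addn0 leqNgt m_lt.
by rewrite mxE (factor_kills (IH _ _)) ?mulr0 // addSnnS.
Qed.

End Support.

Section Vertex.
Variable k0 : 'I_n.
Hypothesis grade0 : forall k, (gr k == 0%N) = (k == k0).
Local Notation w := (delta_mx k0 0 : 'cV[F]_n).

Lemma gr_k0 : gr k0 = 0%N.
Proof. by apply/eqP; rewrite grade0. Qed.

Lemma mul_delta_entry m (X : 'M[F]_(m, n)) i : (X *m w) i 0 = X i k0.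
Proof. by rewrite -colE mxE. Qed.

Lemma delta_homog : forall k j, w k j != 0 -> gr k = 0%N.
Proof.
move=> k j; rewrite mxE; case: (eqVneq k k0) => [-> _|_]; first exact: gr_k0.
by rewrite eqxx.
Qed.

Lemma low_delta L : lowering L -> L *m w = 0.
Proof.
move=> L_low; apply/matrixP => k j; rewrite (ord1 j) mul_delta_entry mxE.
by case: (eqVneq (L k k0) 0) => // /L_low; rewrite gr_k0.
Qed.

Lemma raise_delta_homog R : raising R -> forall k j, (R *m w) k j != 0 -> gr k = 1%N.
Proof. by move=> R_raise k j; rewrite (ord1 j) mul_delta_entry => /R_raise ->; rewrite gr_k0. Qed.

Lemma delta_mul_inj p (X Y : 'rV[F]_p) : w *m X = w *m Y -> X = Y.
Proof.
have row_k0 (Z : 'rV[F]_p) : row k0 (w *m Z) = Z.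
  by apply/rowP => j; rewrite !mxE big_ord1 !mxE !eqxx mul1r.
by move=> wXY; rewrite -(row_k0 X) wXY row_k0.
Qed.

Lemma rank_one (E : 'M[F]_n) :
  (forall k j, (0 < gr k)%N -> E k j = 0) -> E = w *m row k0 E.
Proof.
move=> Esupp; apply/matrixP => k j; rewrite mxE big_ord1 !mxE eqxx andbT.
case: (eqVneq k k0) => [->|k_neq]; first by rewrite mul1r.
by rewrite mul0r Esupp // lt0n grade0.
Qed.

Theorem sandwich d (N L A R : 'M[F]_n) tN tA z :
  (forall k, (gr k <= d)%N) -> (0 < d)%N ->
  lowering L -> N = gdiag tN + L -> raising R -> A = gdiag tA + R ->
  (forall j, (0 < j <= d)%N -> tN 0%N != tN j) -> L *m R *m w = z *: w ->
  let E := lprod N tN 0 (iota 1 d) in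
  E *m A *m E = (tA 0%N + z / (tN 0%N - tN 1%N)) *: E.
Proof.
move=> gr_le d_gt0 L_low NE R_raise AE tN_inj LRw E; set f := row k0 E.
have Ew : E = w *m f by apply: rank_one => k j; exact: (lprod_support gr_le L_low NE).
have Nw : N *m w = tN 0%N *: w.
  by rewrite NE mulmxDl (low_delta L_low) addr0 (gdiag_homog _ delta_homog).
have fw : f *m w = 1%:M.
  apply: delta_mul_inj; rewrite mulmxA -Ew mulmx1; apply: lprod_fix => // j.
  by rewrite mem_iota => /andP [j_gt0 j_le]; rewrite tN_inj // j_gt0 -ltnS -(add1n d).
have fN : f *m N = tN 0%N *: f.
  have EN : E *m N = N *m E by rewrite /E lprod_comm.
  apply: delta_mul_inj; rewrite mulmxA -Ew EN Ew mulmxA Nw.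
  by rewrite -scalemxAl scalemxAr.
have NRw : N *m (R *m w) = tN 1%N *: (R *m w) + z *: w.
  by rewrite NE mulmxDl [L *m _]mulmxA LRw (gdiag_homog _ (raise_delta_homog R_raise)) addrC.
pose x := (f *m (R *m w)) 0 0.
have x_eq : x = z / (tN 0%N - tN 1%N).
  have := congr1 (fun Y : 'M[F]_1 => Y 0 0) (congr1 (mulmx f) NRw).
  rewrite mulmxA fN -scalemxAl mulmxDr -!scalemxAr fw.
  rewrite (mx11_scalar (f *m (R *m w))) -/x !mxE /= !mulr1n mulr1 => x_rel.
  have t01 : tN 0%N - tN 1%N != 0 by rewrite subr_eq0 tN_inj.
  by apply: (mulIf t01); rewrite mulfVK // mulrC mulrBl x_rel addrAC subrr add0r.
have fAw : f *m (A *m w) = (tA 0%N + x)%:M.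
  rewrite AE mulmxDl mulmxDr (gdiag_homog _ delta_homog) -scalemxAr fw.
  by rewrite (mx11_scalar (f *m (R *m w))) -/x scalemx1 raddfD.
rewrite Ew; have -> : w *m f *m A *m (w *m f) = w *m (f *m (A *m w)) *m f by rewrite !mulmxA.
by rewrite fAw mul_mx_scalar -x_eq scalemxAl.
Qed.

End Vertex.
End Grading.

Section Flip.
Variables (F : fieldType) (n d : nat) (gr : 'I_n -> nat).
Hypothesis gr_le : forall k, (gr k <= d)%N.
Local Notation cogr := (fun k => d - gr k)%N.

Lemma lowering_flip (M : 'M[F]_n) : raising gr M -> lowering cogr M.
Proof. by move=> M_raise k l /M_raise gr_kl; move: (gr_le k); rewrite gr_kl; lia. Qed.

Lemma raising_flip (M : 'M[F]_n) : lowering gr M -> raising cogr M.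
Proof. by move=> M_low k l /M_low gr_lk; move: (gr_le l); rewrite gr_lk; lia. Qed.

Lemma gdiag_flip (t : nat -> F) : gdiag gr t = gdiag cogr (fun i => t (d - i)%N).
Proof. by apply/matrixP => k l; rewrite !gdiagE subKn. Qed.

End Flip.

(* The module V(alpha_1) (x) ... (x) V(alpha_d): deg counts the y-factors of a
   basis vector; bottom is x(x)...(x)x and top is y(x)...(x)y. *)
Section Tensor.
Variables (F : fieldType) (q : F).
Hypothesis q_neq0 : q != 0.

Fixpoint deg (s : seq F) : 'I_(dimV s) -> nat :=
  match s return 'I_(dimV s) -> nat with
  | [::] => fun _ => 0%N
  | _ :: s' => fun k => match split k with inl k' => deg k' | inr k' => (deg k').+1 end
  end.
Arguments deg : clear implicits.

Fixpoint bottom (s : seq F) : 'I_(dimV s) :=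
  match s return 'I_(dimV s) with [::] => ord0 | _ :: s' => lshift _ (bottom s') end.

Fixpoint top (s : seq F) : 'I_(dimV s) :=
  match s return 'I_(dimV s) with [::] => ord0 | _ :: s' => rshift _ (top s') end.

Definition yvec (s : seq F) : 'cV[F]_(dimV s) := delta_mx (top s) 0.

Lemma deg_lshift al s k : deg (al :: s) (lshift _ k) = deg s k.
Proof. by rewrite /= (unsplitK (inl k)). Qed.

Lemma deg_rshift al s k : deg (al :: s) (rshift _ k) = (deg s k).+1.
Proof. by rewrite /= (unsplitK (inr k)). Qed.

Arguments deg : simpl never.
Arguments dimV : simpl never.

Lemma deg_le s k : (deg s k <= size s)%N.
Proof.
elim: s k => [|al s IH] k //; rewrite -(splitK k); case: (split k) => k' /=.
  by rewrite deg_lshift ltnW // ltnS IH.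
by rewrite deg_rshift ltnS IH.
Qed.

Lemma deg_bottom s k : (deg s k == 0%N) = (k == bottom s).
Proof.
elim: s k => [|al s IH] k; first by rewrite (ord1 k).
rewrite -(splitK k); case: (split k) => k' /=.
  by rewrite deg_lshift IH eq_lshift.
by rewrite deg_rshift eq_rlshift.
Qed.

Lemma deg_top s k : ((size s - deg s k)%N == 0%N) = (k == top s).
Proof.
rewrite subn_eq0; elim: s k => [|al s IH] k; first by rewrite (ord1 k).
rewrite -(splitK k); case: (split k) => k' /=.
  by rewrite deg_lshift eq_lrshift ltnNge deg_le.
by rewrite deg_rshift ltnS IH eq_rshift.
Qed.

Lemma xvec_delta s : xvec s = delta_mx (bottom s) 0.
Proof.
elim: s => [|al s IH] /=; last by rewrite IH delta_mx_ushift.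
by apply/matrixP => i j; rewrite (ord1 i) (ord1 j) !mxE.
Qed.

Lemma yvec_cons al s : yvec (al :: s) = col_mx 0 (yvec s).
Proof. exact: delta_mx_dshift. Qed.

Lemma gdiag_cons al s (t : nat -> F) : gdiag (deg (al :: s)) t =
  block_mx (gdiag (deg s) t) 0 0 (gdiag (deg s) (fun i => t i.+1)).
Proof.
apply/matrixP => k l; rewrite -(splitK k) -(splitK l).
case: (split k) => k'; case: (split l) => l' /=; rewrite gdiagE ?deg_lshift ?deg_rshift.
- by rewrite block_mxEul eq_lshift gdiagE.
- by rewrite block_mxEur eq_lrshift mxE.
- by rewrite block_mxEdl eq_rlshift mxE.
- by rewrite block_mxEdr eq_rshift gdiagE.
Qed.

Lemma gdiag_xvec s (t : nat -> F) : gdiag (deg s) t *m xvec s = t 0%N *: xvec s.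
Proof. by rewrite xvec_delta (gdiag_homog _ (delta_homog (@deg_bottom s))). Qed.

Lemma gdiag_yvec s (t : nat -> F) : gdiag (deg s) t *m yvec s = t (size s) *: yvec s.
Proof.
rewrite (gdiag_flip (@deg_le s)) /yvec (gdiag_homog _ (delta_homog (@deg_top s))).
by rewrite subn0.
Qed.

Lemma K0_gdiag s : K0m q s = gdiag (deg s) (fun i => q ^+ (2 * i) / q ^+ size s).
Proof.
elim: s => [|al s IH].
  by apply/matrixP => i j; rewrite (ord1 i) (ord1 j) gdiagE !mxE -[deg [::] _]/0%N divr1.
rewrite /= /kron2 !scale0r IH gdiag_cons !gdiagZ.
congr block_mx; apply: eq_gdiag => i.
  by rewrite exprS; field; rewrite expf_neq0.
by rewrite mulnS exprD !exprS; field; rewrite expf_neq0.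
Qed.

Lemma K1_gdiag s : K1m q s = gdiag (deg s) (fun i => q ^+ size s / q ^+ (2 * i)).
Proof.
elim: s => [|al s IH].
  by apply/matrixP => i j; rewrite (ord1 i) (ord1 j) gdiagE !mxE -[deg [::] _]/0%N divr1.
rewrite /= /kron2 !scale0r IH gdiag_cons !gdiagZ.
congr block_mx; apply: eq_gdiag => i.
  by rewrite exprS; field; rewrite expf_neq0.
by rewrite mulnS exprD !exprS; field; rewrite expf_neq0.
Qed.

Lemma theta_nat a b c m i :
  theta q a b c m i = a + b * (q ^+ (2 * i) / q ^+ m) + c * (q ^+ m / q ^+ (2 * i)).
Proof. by rewrite /theta !expfzDr ?expf_neq0 // -!invr_expz. Qed.

Lemma theta_gdiag a b c s :
  a%:M + b *: K0m q s + c *: K1m q s = gdiag (deg s) (theta q a b c (size s)).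
Proof.
rewrite K0_gdiag K1_gdiag (@gdiag_const _ _ (deg s)) !gdiagZ !gdiagD.
by apply: eq_gdiag => i; rewrite theta_nat.
Qed.

(* Diagonal coefficients by which R (resp. L) maps the x-block of a new tensor
   factor alpha to its y-block (resp. back). *)
Definition rcoef (u v al : F) (m i : nat) : F :=
  u * q^-1 * al * (q ^+ (2 * i) / q ^+ m) + v * q * (q ^+ m / q ^+ (2 * i)).

Definition lcoef (us vs al : F) (m i : nat) : F :=
  us * (q ^+ m / q ^+ (2 * i)) + vs * q ^+ 2 / al * (q ^+ (2 * i) / q ^+ m).

Lemma Rm_cons u v al s : Rm q u v (al :: s) =
  block_mx (Rm q u v s) 0 (gdiag (deg s) (rcoef u v al (size s))) (Rm q u v s).
Proof.
rewrite /Rm /= /kron2 !add_block_mx mulmx_block !scale_block_mx add_block_mx.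
rewrite !scale0r !scale1r !add0r !addr0 !mul0mx !mulmx0 !addr0 !add0r.
congr block_mx.
- by rewrite -scalemxAl -scalemxAr [q^-1 *: _]scalerA mulVf // scale1r.
- by rewrite !scaler0 addr0.
- rewrite mul1mx !scalerA K0_gdiag K1_gdiag !gdiagZ gdiagD.
  by apply: eq_gdiag => i; rewrite /rcoef; ring.
- by rewrite -scalemxAl -scalemxAr [q *: _]scalerA mulfV // scale1r.
Qed.

Lemma Lm_cons us vs al s : Lm q us vs (al :: s) =
  block_mx (Lm q us vs s) (gdiag (deg s) (lcoef us vs al (size s))) 0 (Lm q us vs s).
Proof.
rewrite /Lm /= /kron2 !add_block_mx mulmx_block !scale_block_mx add_block_mx.
rewrite !scale0r !scale1r !add0r !addr0 !mul0mx !mulmx0 !addr0 !add0r.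
congr block_mx.
- by rewrite -scalemxAl -scalemxAr [q *: _]scalerA mulfV // scale1r.
- rewrite -scalemxAl mul1mx !scalerA K0_gdiag K1_gdiag !gdiagZ gdiagD.
  by apply: eq_gdiag => i; rewrite /lcoef; ring.
- by rewrite !scaler0 addr0.
- by rewrite -scalemxAl -scalemxAr [q^-1 *: _]scalerA mulVf // scale1r.
Qed.

Lemma Rm_nil u v : Rm q u v [::] = 0.
Proof. by rewrite /Rm /= mul0mx !scaler0 addr0. Qed.

Lemma Lm_nil us vs : Lm q us vs [::] = 0.
Proof. by rewrite /Lm /= mul0mx !scaler0 addr0. Qed.

Lemma raising_cons al s (R : 'M[F]_(dimV s)) (t : nat -> F) :
  raising (deg s) R -> raising (deg (al :: s)) (block_mx R 0 (gdiag (deg s) t) R).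
Proof.
move=> R_raise k l; rewrite -(splitK k) -(splitK l).
case: (split k) => k'; case: (split l) => l' /=; rewrite ?deg_lshift ?deg_rshift.
- by rewrite block_mxEul => /R_raise.
- by rewrite block_mxEur mxE eqxx.
- by rewrite block_mxEdl gdiagE; case: (eqVneq k' l') => [->|]; rewrite ?mulr0n ?eqxx.
- by rewrite block_mxEdr => /R_raise ->.
Qed.

Lemma lowering_cons al s (L : 'M[F]_(dimV s)) (t : nat -> F) :
  lowering (deg s) L -> lowering (deg (al :: s)) (block_mx L (gdiag (deg s) t) 0 L).
Proof.
move=> L_low k l; rewrite -(splitK k) -(splitK l).
case: (split k) => k'; case: (split l) => l' /=; rewrite ?deg_lshift ?deg_rshift.
- by rewrite block_mxEul => /L_low.
- by rewrite block_mxEur gdiagE; case: (eqVneq k' l') => [->|]; rewrite ?mulr0n ?eqxx.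
- by rewrite block_mxEdl mxE eqxx.
- by rewrite block_mxEdr => /L_low ->.
Qed.

Lemma Rm_raising u v s : raising (deg s) (Rm q u v s).
Proof.
elim: s => [|al s IH]; last by rewrite Rm_cons; apply: raising_cons.
by move=> k l; rewrite Rm_nil mxE eqxx.
Qed.

Lemma Lm_lowering us vs s : lowering (deg s) (Lm q us vs s).
Proof.
elim: s => [|al s IH]; last by rewrite Lm_cons; apply: lowering_cons.
by move=> k l; rewrite Lm_nil mxE eqxx.
Qed.

Lemma Lm_xvec us vs s : Lm q us vs s *m xvec s = 0.
Proof. by rewrite xvec_delta (low_delta (@deg_bottom s) (@Lm_lowering us vs s)). Qed.

Lemma Rm_yvec u v s : Rm q u v s *m yvec s = 0.
Proof. exact: (low_delta (@deg_top s) (lowering_flip (@deg_le s) (@Rm_raising u v s))). Qed.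

(* The scalars by which LR acts on x(x)...(x)x and RL acts on y(x)...(x)y. *)
Fixpoint zx (u v us vs : F) (s : seq F) : F :=
  if s is al :: s' then
    zx u v us vs s' + rcoef u v al (size s') 0 * lcoef us vs al (size s') 0
  else 0.

Fixpoint zy (u v us vs : F) (s : seq F) : F :=
  if s is al :: s' then
    zy u v us vs s' + lcoef us vs al (size s') (size s') * rcoef u v al (size s') (size s')
  else 0.

Lemma LR_xvec u v us vs s :
  Lm q us vs s *m (Rm q u v s *m xvec s) = zx u v us vs s *: xvec s.
Proof.
elim: s => [|al s IH]; first by rewrite Rm_nil mul0mx mulmx0 scale0r.
rewrite Rm_cons Lm_cons [xvec _]/= mul_block_col !mulmx0 !addr0 gdiag_xvec.
rewrite mul_block_col mul0mx add0r -!scalemxAr gdiag_xvec (Lm_xvec us vs s) scaler0 IH.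
by rewrite scalerA -scalerDl scale_col_mx scaler0.
Qed.

Lemma RL_yvec u v us vs s :
  Rm q u v s *m (Lm q us vs s *m yvec s) = zy u v us vs s *: yvec s.
Proof.
elim: s => [|al s IH]; first by rewrite Lm_nil mul0mx mulmx0 scale0r.
rewrite Lm_cons Rm_cons yvec_cons mul_block_col !mulmx0 !add0r gdiag_yvec.
rewrite mul_block_col mul0mx addr0 -!scalemxAr gdiag_yvec (Rm_yvec u v s) scaler0 IH.
by rewrite scalerA -scalerDl scale_col_mx scaler0 addrC.
Qed.

Lemma LR_eigenvalue u v us vs z s :
  Lm q us vs s *m Rm q u v s *m xvec s = z *: xvec s -> z = zx u v us vs s.
Proof.
rewrite -mulmxA LR_xvec xvec_delta => /(congr1 (fun Y : 'cV_(dimV s) => Y (bottom s) 0)).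
by rewrite !mxE !eqxx !mulr1 => ->.
Qed.

Lemma pow_double m : q ^+ (2 * m) = q ^+ m * q ^+ m.
Proof. by rewrite mul2n -addnn exprD. Qed.

(* Closed form of q * sum_{k<m} (q^(-2k) - q^(2k)), the coefficient of
   (vu* - uv* ) in zy - zx. *)
Definition sdiff (m : nat) : F :=
  q * (q * q + 1 - q * q / (q ^+ m * q ^+ m) - q ^+ m * q ^+ m) / (q * q - 1).

Lemma zy_sub_zx u v us vs s : q * q - 1 != 0 -> all (fun al => al != 0) s ->
  zy u v us vs s - zx u v us vs s = (v * us - u * vs) * sdiff (size s).
Proof.
move=> q2_neq1; elim: s => [|al s IH] /=.
  by rewrite /sdiff expr0 !mulr1 => _; field; rewrite q2_neq1 oner_eq0.
move=> /andP [al_neq0 /IH zs]; rewrite opprD addrACA zs /sdiff /rcoef /lcoef.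
rewrite muln0 expr0 pow_double [q ^+ (size s).+1]exprS.
have Q_neq0 : q ^+ size s != 0 by rewrite expf_neq0.
move: (q ^+ size s) Q_neq0 => Q Q_neq0.
by field; rewrite q2_neq1 Q_neq0 q_neq0 al_neq0 oner_eq0.
Qed.

Lemma sdiff_theta e a b c a' b' c' u v us vs : q * q - 1 != 0 ->
  u * vs = - (b * b' * q^-1 * (q - q^-1) ^+ 2) ->
  v * us = - (c * c' * q^-1 * (q - q^-1) ^+ 2) ->
  let th := theta q a b c e.+1 in let ths := theta q a' b' c' e.+1 in
  (v * us - u * vs) * sdiff e.+1 =
    (ths e.+1 - ths 1%N) * (th e - th e.+1) + (ths 0%N - ths 1%N) * (th 0%N - th e).
Proof.
move=> q2_neq1 uvs vus th ths; rewrite uvs vus /th /ths !theta_nat !pow_double /sdiff.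
rewrite !exprS !expr0 !mulr1.
have Q_neq0 : q ^+ e != 0 by rewrite expf_neq0.
move: (q ^+ e) Q_neq0 => Q Q_neq0.
by field; rewrite q2_neq1 Q_neq0 q_neq0 oner_eq0.
Qed.

Lemma Estar0_sandwich a b c a' b' c' u v us vs z s :
  let th := theta q a b c (size s) in let ths := theta q a' b' c' (size s) in
  (0 < size s)%N -> (forall j, (0 < j <= size s)%N -> ths 0%N != ths j) ->
  Lm q us vs s *m Rm q u v s *m xvec s = z *: xvec s ->
  let Es := Eidem (Asm q a' b' c' us vs s) ths (size s) 0 in
  Es *m Am q a b c u v s *m Es = (th 0%N + z / (ths 0%N - ths 1%N)) *: Es.
Proof.
move=> th ths s_gt0 ths_inj; rewrite xvec_delta => LRx Es; rewrite /Es Eidem_first.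
apply: (sandwich (@deg_bottom s) (@deg_le s) s_gt0 (@Lm_lowering us vs s) _
          (@Rm_raising u v s) _ ths_inj LRx).
  by rewrite /Asm theta_gdiag.
by rewrite /Am theta_gdiag.
Qed.

Lemma Ed_sandwich a b c a' b' c' u v us vs s :
  let th := theta q a b c (size s) in let ths := theta q a' b' c' (size s) in
  (0 < size s)%N -> (forall j, (0 < j <= size s)%N -> th (size s) != th (size s - j)%N) ->
  let E := Eidem (Am q a b c u v s) th (size s) (size s) in
  E *m Asm q a' b' c' us vs s *m E =
    (ths (size s) + zy u v us vs s / (th (size s) - th (size s).-1)) *: E.
Proof.
move=> th ths s_gt0 th_inj E; rewrite /E Eidem_last.
have RLy : Rm q u v s *m Lm q us vs s *m yvec s = zy u v us vs s *: yvec s.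
  by rewrite -mulmxA RL_yvec.
have AE : Am q a b c u v s =
    gdiag (fun k => size s - deg s k)%N (fun i => th (size s - i)%N) + Rm q u v s.
  by rewrite /Am theta_gdiag (gdiag_flip (@deg_le s)).
have AsE : Asm q a' b' c' us vs s =
    gdiag (fun k => size s - deg s k)%N (fun i => ths (size s - i)%N) + Lm q us vs s.
  by rewrite /Asm theta_gdiag (gdiag_flip (@deg_le s)).
have th_inj' j : (0 < j <= size s)%N -> th (size s - 0)%N != th (size s - j)%N.
  by rewrite subn0; apply: th_inj.
have := sandwich (@deg_top s) (fun k => leq_subr _ _) s_gt0
  (lowering_flip (@deg_le s) (@Rm_raising u v s)) AE
  (raising_flip (@deg_le s) (@Lm_lowering us vs s)) AsE th_inj' RLy.
by rewrite !subn0 subn1.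
Qed.

End Tensor.

(* The algebra turning the value of part (ii) into the paper's formula. *)
Lemma eigenvalue_shift (F : fieldType) (S0 S1 Sd T0 Te Td z1 z2 : F) : Te != Td ->
  z2 = z1 + ((Sd - S1) * (Te - Td) + (S0 - S1) * (T0 - Te)) ->
  Sd + z2 / (Td - Te) = S1 - (z1 + (S0 - S1) * (T0 - Te)) / (Te - Td).
Proof.
move=> Te_neq ->; have TdTe : Td - Te != 0 by rewrite subr_eq0 eq_sym.
have TeTd : Te - Td != 0 by rewrite subr_eq0.
by field; rewrite TdTe TeTd.
Qed.

Lemma inj_neq (F : fieldType) d (f : nat -> F) i j :
  (forall i j, (i <= d)%N -> (j <= d)%N -> f i = f j -> i = j) ->
  (i <= d)%N -> (j <= d)%N -> i != j -> f i != f j.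
Proof. by move=> f_inj i_le j_le; apply: contraNneq => /f_inj ->. Qed.

Theorem lemma9p8 (F : closedFieldType) (d : nat)
  (q a b c a' b' c' u v us vs zeta1 : F) (alpha : seq F) :
  size alpha = d -> (0 < d)%N ->
  q != 0 -> b != 0 -> c != 0 -> b' != 0 -> c' != 0 ->
  q ^+ 2 != 1 -> q ^+ 2 != -1 ->
  (forall i j : nat, (i <= d)%N -> (j <= d)%N ->
     theta q a b c d i = theta q a b c d j -> i = j) ->
  (forall i j : nat, (i <= d)%N -> (j <= d)%N ->
     theta q a' b' c' d i = theta q a' b' c' d j -> i = j) ->
  all (fun al => al != 0) alpha ->
  u * vs = - (b * b' * q^-1 * (q - q^-1) ^+ 2) ->
  v * us = - (c * c' * q^-1 * (q - q^-1) ^+ 2) ->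
  (* zeta1 is the scalar by which LR acts on U_0 *)
  (Lm q us vs alpha *m Rm q u v alpha) *m xvec alpha = zeta1 *: xvec alpha ->
  let th := theta q a b c d in
  let ths := theta q a' b' c' d in
  let A := Am q a b c u v alpha in
  let As := Asm q a' b' c' us vs alpha in
  let E := Eidem A th d in
  let Es := Eidem As ths d in
  Es 0%N *m A *m Es 0%N = (th 0%N + zeta1 / (ths 0%N - ths 1%N)) *: Es 0%N /\
  E d *m As *m E d =
    (ths 1%N - (zeta1 + (ths 0%N - ths 1%N) * (th 0%N - th d.-1))
               / (th d.-1 - th d)) *: E d.
Proof.
move=> <- {d} s_gt0 q_neq0 _ _ _ _ q2_neq1 _ th_inj ths_inj alpha_neq0 uvs vus LRx.
move=> th ths A As E Es.
have th_top j : (0 < j <= size alpha)%N -> th (size alpha) != th (size alpha - j)%N.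
  case/andP=> j_gt0 j_le; apply: inj_neq th_inj _ _ _ => //; first exact: leq_subr.
  by rewrite neq_ltn ltn_subrL j_gt0 (leq_trans j_gt0 j_le) orbT.
split.
  apply: Estar0_sandwich => // j /andP [j_gt0 j_le].
  by apply: inj_neq ths_inj _ _ _ => //; rewrite eq_sym -lt0n.
rewrite /E Ed_sandwich //; congr (_ *: _).
have q2_neq0 : q * q - 1 != 0 by rewrite -expr2 subr_eq0.
have zyE : zy q u v us vs alpha = zeta1 + (v * us - u * vs) * sdiff q (size alpha).
  have := zy_sub_zx q_neq0 u v us vs q2_neq0 alpha_neq0.
  by rewrite -(LR_eigenvalue q_neq0 LRx) => <-; rewrite addrC subrK.
apply: eigenvalue_shift; first by rewrite eq_sym -subn1 th_top.
have [e size_e] : exists e, size alpha = e.+1 by exists (size alpha).-1; rewrite prednK.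
have := @sdiff_theta F q q_neq0 e a b c a' b' c' u v us vs q2_neq0 uvs vus.
by rewrite zyE /th /ths size_e /= => ->.
Qed.
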